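(* Let $L\in\{1,2,\dots,q-1\}$. Every $L$-MDS code over $F=\mathrm{GF}(q)$ is MDS.
   Context: $\mathsf w(\cdot)$ denotes Hamming weight. For $L\in\mathbb Z^+$ and nonnegative $\tau\in\frac{1}{L+1}\mathbb Z$, a code $\mathcal C\subseteq F^n$ is strongly-$(\tau,L)$-list decodable if there do not exist $y\in F^n$ and $L+1$ distinct codewords $c_0,\dots,c_L\in\mathcal C$ with $\sum_{m=0}^{L}\mathsf w(y-c_m)\le(L+1)\tau$. A linear $[n,k]$ code over $F$ is called $L$-MDS if it is strongly-$\left(\frac{L(n-k)}{L+1},L\right)$-list decodable; equivalently, any $L+1$ distinct vectors lying in a common coset of the code have total Hamming weight greater than $L(n-k)$. *)

From HB Require Import structures.
From mathcomp Require Import all_boot all_order all_algebra all_field.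
Set Implicit Arguments. Unset Strict Implicit. Unset Printing Implicit Defensive.
Import GRing.Theory.
Local Open Scope ring_scope.

Definition wt (F : fieldType) (n : nat) (v : 'rV[F]_n) : nat :=
  #|[set i : 'I_n | v 0 i != 0]|.

(* A linear code of length n over F is a subspace C of F^n; its dimension
   k is \dim C.  Strong (tau, L)-list decodability, where T = (L+1) * tau
   (a nonnegative integer since tau is in (1/(L+1))Z):  there is no y and
   no L+1 distinct codewords c_0..c_L with sum_m w(y - c_m) <= T. *)
Definition strongly_list_decodable (F : fieldType) (n : nat)
    (C : {vspace 'rV[F]_n}) (L T : nat) : Prop :=
  ~ exists (y : 'rV[F]_n) (c : 'I_L.+1 -> 'rV[F]_n),
      [/\ injective c, (forall m, c m \in C) &
          (\sum_(m < L.+1) wt (y - c m) <= T)%N].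

(* L-MDS: strongly-(L(n-k)/(L+1), L)-list decodable, i.e. T = L (n - k). *)
Definition L_MDS (F : fieldType) (n : nat) (C : {vspace 'rV[F]_n}) (L : nat) : Prop :=
  strongly_list_decodable C L (L * (n - \dim C)).

Definition MDS (F : fieldType) (n : nat) (C : {vspace 'rV[F]_n}) : Prop :=
  forall c : 'rV[F]_n, c \in C -> c != 0 -> (n - \dim C < wt c)%N.

From HB Require Import structures.
From mathcomp Require Import all_boot all_order all_algebra all_field.
Set Implicit Arguments. Unset Strict Implicit. Unset Printing Implicit Defensive.
Import GRing.Theory.
Local Open Scope ring_scope.

(* A field with more than L elements gives L+1 distinct multiples a_m c of a
   nonzero codeword c.  Centred at y = a_0 c, the words y - a_m c are all
   nonzero multiples of c except one, so their total weight is L wt(c); an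
   L-MDS code forces L wt(c) > L (n - k), i.e. wt(c) > n - k. *)

Lemma wt0 (F : fieldType) n : wt (0 : 'rV[F]_n) = 0%N.
Proof. by apply: eq_card0 => i; rewrite !inE mxE eqxx. Qed.

Lemma wtZ (F : fieldType) n (a : F) (v : 'rV[F]_n) : a != 0 -> wt (a *: v) = wt v.
Proof. by move=> a0; apply: eq_card => i; rewrite !inE mxE mulf_eq0 (negbTE a0). Qed.

Lemma scalel_inj (F : fieldType) (V : lmodType F) (v : V) :
  v != 0 -> injective ( *:%R^~ v : F -> V).
Proof.
move=> v0 a b /eqP; rewrite -subr_eq0 -scalerBl scaler_eq0 (negbTE v0) orbF.
by rewrite subr_eq0 => /eqP.
Qed.

Lemma strongly_list_decodable_le (F : fieldType) n (C : {vspace 'rV[F]_n}) L T T' :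
  (T' <= T)%N -> strongly_list_decodable C L T -> strongly_list_decodable C L T'.
Proof.
move=> leT CT [y [c [c_inj cC sum_le]]]; apply: CT.
by exists y, c; split=> //; apply: leq_trans leT.
Qed.

Lemma sum_wt_scale_centred (F : fieldType) n L (a : 'I_L.+1 -> F) (c : 'rV[F]_n) :
  injective a ->
  (\sum_(m < L.+1) wt (a ord0 *: c - a m *: c))%N = (L * wt c)%N.
Proof.
move=> a_inj; rewrite big_ord_recl subrr wt0 add0n.
rewrite (eq_bigr (fun _ => wt c)) ?sum_nat_const ?card_ord ?muln_comm //.
move=> m _; rewrite -scalerBl wtZ // subr_eq0.
by apply/eqP => /a_inj.
Qed.

Lemma multiples_not_list_decodable (F : finFieldType) n (C : {vspace 'rV[F]_n}) L
    (c : 'rV[F]_n) :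
  (L.+1 <= #|F|)%N -> c \in C -> c != 0 -> ~ strongly_list_decodable C L (L * wt c).
Proof.
move=> LF cC c0; apply.
pose a (m : 'I_L.+1) : F := enum_val (widen_ord LF m).
have a_inj : injective a by move=> i j /enum_val_inj [] /val_inj.
exists (a ord0 *: c), (fun m => a m *: c); split.
- exact: inj_comp (scalel_inj c0) a_inj.
- by move=> m; rewrite memvZ.
- by rewrite sum_wt_scale_centred.
Qed.

Theorem mainTheorem8 (F : finFieldType) (n : nat) (C : {vspace 'rV[F]_n}) (L : nat) :
  (1 <= L <= #|F|.-1)%N -> L_MDS C L -> MDS C.
Proof.
move=> /andP[_ L_le] C_LMDS c cC c0; rewrite ltnNge; apply/negP => wt_le.
have F_gt0 : (0 < #|F|)%N by apply/card_gt0P; exists 0.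
have LF : (L.+1 <= #|F|)%N by rewrite -(prednK F_gt0) ltnS.
apply: (multiples_not_list_decodable LF cC c0).
exact: strongly_list_decodable_le (leq_mul (leqnn L) wt_le) C_LMDS.
Qed.
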